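(* Let $G$ be a finite connected graph with nodes $\{1,\dots,n_v\}$ and edges $\{1,\dots,n_e\}$. Let $B\in\mathbb{R}^{n_e\times n_v}$ be its edge-vertex incidence matrix and $L=B^\top B$. Let $\varrho\in\{1,\dots,n_v\}$ be a node. Let $B_{\mathtt{C}\widehat\varrho}$ be $B$ restricted to the rows in $\mathtt{C}$ and with column $\varrho$ removed, and let $L_{\widehat\varrho\widehat\varrho}$ be $L$ with row and column $\varrho$ removed. Let $\mathtt{C}\subseteq\{1,\dots,n_e\}$ be such that $$\Big(\prod_{i\neq\varrho}\mathrm{deg}(i)\Big)^{-1}\det\begin{bmatrix}0_{|\mathtt{C}|}&B_{\mathtt{C}\widehat\varrho}\\-(B_{\mathtt{C}\widehat\varrho})^\top&\mathrm{skew}(L_{\widehat\varrho\widehat\varrho})\end{bmatrix}\neq0.$$ Then $\mathtt{C}$ is the set of (simple) edges of a dimer-rooted forest of $G$ with root $\varrho$.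
   Context: In the incidence matrix, each edge $e=(i,j)$ with $i<j$ has row $B_{e,:}$ with entry $+1$ at $i$, $-1$ at $j$, and $0$ elsewhere. $\mathrm{deg}(i)$ is the number of neighbours of node $i$. For a square matrix $M$, $\mathrm{skew}(M)=\mathrm{triu}(M)-\mathrm{triu}(M)^\top$, where $\mathrm{triu}$ is the upper-triangular part with respect to the node ordering. Rows and columns are taken in increasing index order. $0_m$ is the $m\times m$ zero matrix. Definition: a dimer-rooted forest of $G$ with root $\varrho$ is a set of edges $\mathtt{C}$ such that (i) $\mathtt{C}$ contains no cycle and $|\mathtt{C}|$ has the same parity as $n_v-1$; and (ii) $\mathtt{C}$ can be completed to a spanning subgraph by adding an edge-disjoint set of dimers (edges of $G$, not part of $\mathtt{C}$) such that each connected component of $\mathtt{C}$ is either a tree rooted at $\varrho$ or a tree rooted at one dimer. *)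

From HB Require Import structures.
From mathcomp Require Import all_boot all_order all_algebra.
From mathcomp Require Import reals.
Set Implicit Arguments. Unset Strict Implicit. Unset Printing Implicit Defensive.
Import Order.TTheory GRing.Theory Num.Theory.
Local Open Scope ring_scope.

(* A graph with nodes 'I_nv and edges 'I_ne is given by the map
   [ends : 'I_ne -> 'I_nv * 'I_nv], edge e = (i, j) with i < j. *)
Section Graph.
Variables (nv ne : nat) (ends : 'I_ne -> 'I_nv * 'I_nv).

Definition simple_graph : Prop :=
  (forall e, ((ends e).1 < (ends e).2)%N) /\ injective ends.

Definition adjE (C : {set 'I_ne}) : rel 'I_nv :=
  fun i j => [exists e in C, (ends e == (i, j)) || (ends e == (j, i))].

Definition adj : rel 'I_nv := adjE setT.

Definition connected_graph : Prop := forall i j, connect adj i j.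

Definition deg (i : 'I_nv) : nat := #|[set j | adj i j]|.

Definition incidence (R : pzRingType) : 'M[R]_(ne, nv) :=
  \matrix_(e, i) (if i == (ends e).1 then 1 else if i == (ends e).2 then -1 else 0).

(* C contains no cycle: no edge of C lies on a cycle of C, i.e. its two
   endpoints are not connected in C minus that edge *)
Definition acyclic (C : {set 'I_ne}) : Prop :=
  forall e, e \in C -> ~~ connect (adjE (C :\ e)) (ends e).1 (ends e).2.

Definition covered (D : {set 'I_ne}) (v : 'I_nv) : bool :=
  [exists d in D, (v == (ends d).1) || (v == (ends d).2)].

(* dimer-rooted forest with root rho:
   (i) acyclic, |C| = nv - 1 mod 2;
   (ii) there is a set D of dimers (edges not in C, pairwise vertex-disjoint)
        such that the component of C containing rho is a tree rooted at rho
        (contains no dimer vertex) and every other component of C is a tree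
        rooted at exactly one dimer vertex. *)
Definition dimer_rooted_forest (rho : 'I_nv) (C : {set 'I_ne}) : Prop :=
  acyclic C /\ odd #|C| = odd (nv - 1) /\
  exists D : {set 'I_ne},
    [disjoint C & D] /\
    (forall d1 d2, d1 \in D -> d2 \in D -> d1 != d2 ->
       [disjoint [:: (ends d1).1; (ends d1).2] & [:: (ends d2).1; (ends d2).2]]) /\
    (forall v, connect (adjE C) rho v -> ~~ covered D v) /\
    (forall u, ~~ connect (adjE C) rho u ->
       #|[set v | connect (adjE C) u v & covered D v]| = 1%N).

End Graph.
Arguments incidence {nv ne} ends R.

Definition triu (R : pzRingType) (m : nat) (M : 'M[R]_m) : 'M[R]_m :=
  \matrix_(i, j) (if (i <= j)%N then M i j else 0).
Definition skew_part (R : pzRingType) (m : nat) (M : 'M[R]_m) : 'M[R]_m :=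
  triu M - (triu M)^T.

(* B restricted to the rows in C (increasing order) with column rho removed;
   nodes are 'I_n.+1, the remaining columns are lift rho : 'I_n -> 'I_n.+1
   (increasing order). *)
Definition B_C_hat (R : pzRingType) (n ne : nat) (ends : 'I_ne -> 'I_n.+1 * 'I_n.+1)
  (C : {set 'I_ne}) (rho : 'I_n.+1) : 'M[R]_(#|C|, n) :=
  \matrix_(a, j) incidence ends R (enum_val a) (lift rho j).

Definition L_hat (R : pzRingType) (n ne : nat) (ends : 'I_ne -> 'I_n.+1 * 'I_n.+1)
  (rho : 'I_n.+1) : 'M[R]_n :=
  let L := (incidence ends R)^T *m incidence ends R in
  \matrix_(i, j) L (lift rho i) (lift rho j).

Arguments B_C_hat R {n ne} ends C rho.
Arguments L_hat R {n ne} ends rho.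

From HB Require Import structures.
From mathcomp Require Import all_boot all_order all_algebra.
From mathcomp Require Import reals fingroup perm.
Set Implicit Arguments. Unset Strict Implicit. Unset Printing Implicit Defensive.
Import Order.TTheory GRing.Theory Num.Theory.

(* The matrix M of the hypothesis is skew-symmetric. Hence det M != 0 forces |C| + n to be
   even, and forces the rows of B_C to be independent, which rules out cycles in C. In the
   Leibniz expansion of det M, the terms of permutations with an odd cycle cancel in pairs
   (reverse that cycle), so a permutation with only even cycles and a nonzero term survives;
   alternating along its cycles yields a perfect matching of the indices of M through nonzero
   entries. It sends each edge of C to one of its endpoints other than rho, injectively, and
   pairs the remaining nodes other than rho through edges of G (nonzero entries of L).
   Orient each edge of C towards its matched endpoint. Along a path of C leaving rho or an
   unmatched node every edge points forward, so no two of these nodes are connected in C;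
   and following edges backwards from any node of a component avoiding rho cannot cycle, so
   it ends at an unmatched node. Hence every such component carries exactly one dimer. *)

Section CycleReversal.
Variable T : finType.
Implicit Types (s : {perm T}) (x i : T).

Lemma fconnect_permr s x i : fconnect s x (s i) = fconnect s x i.
Proof. by rewrite -same_fconnect1_r //; apply: perm_inj. Qed.

Lemma fconnect_permVr s x i : fconnect s x (s^-1 i)%g = fconnect s x i.
Proof. by rewrite -fconnect_permr permKV. Qed.

Lemma fconnect_perm_sub s t :
  (forall i, t i = s i \/ t i = (s^-1)%g i) -> subrel (fconnect t) (fconnect s).
Proof.
move=> ts; apply: connect_sub => i _ /eqP <-.
have [->|->] := ts i; first exact: fconnect1.
rewrite fconnect_sym; last exact: perm_inj.
by rewrite -{2}(permKV s i) fconnect1.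
Qed.

Definition cycle_rev_fun s x i := if fconnect s x i then (s^-1)%g i else s i.

Lemma cycle_rev_fun_inj s x : injective (cycle_rev_fun s x).
Proof.
move=> i j; rewrite /cycle_rev_fun.
case in_i: (fconnect s x i); case in_j: (fconnect s x j) => eq_ij.
- exact: (perm_inj (s := s^-1)%g).
- by move: in_j; rewrite -fconnect_permr -eq_ij fconnect_permVr in_i.
- by move: in_i; rewrite -fconnect_permr eq_ij fconnect_permVr in_j.
- exact: perm_inj eq_ij.
Qed.

Definition cycle_rev s x : {perm T} := perm (@cycle_rev_fun_inj s x).

Lemma cycle_revE s x i :
  cycle_rev s x i = if fconnect s x i then (s^-1)%g i else s i.
Proof. by rewrite permE. Qed.

Lemma odd_cycle_rev s x : odd_perm (cycle_rev s x) = odd_perm s.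
Proof.
have r_inj : injective (fun i => if fconnect s x i then s i else i).
  move=> i j; case in_i: (fconnect s x i); case in_j: (fconnect s x j) => eq_ij.
  - exact: perm_inj eq_ij.
  - by move: in_j; rewrite -eq_ij fconnect_permr in_i.
  - by move: in_i; rewrite eq_ij fconnect_permr in_j.
  - exact: eq_ij.
(* [r] is the cycle of [s] through [x]; reversing that cycle composes [s] with [r^-2] *)
pose r : {perm T} := perm r_inj.
have rV i : (r^-1)%g i = if fconnect s x i then (s^-1)%g i else i.
  apply: (@perm_inj _ r); rewrite permKV permE.
  by case in_i: (fconnect s x i); rewrite ?fconnect_permVr in_i ?permKV.
have -> : cycle_rev s x = (r^-1 * r^-1 * s)%g.
  apply/permP => i; rewrite !permM cycle_revE !rV.
  by case in_i: (fconnect s x i); rewrite ?fconnect_permVr in_i ?permKV.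
by rewrite !odd_permM odd_permV addbb.
Qed.

Lemma fconnect_cycle_rev s x : fconnect (cycle_rev s x) =2 fconnect s.
Proof.
move=> y z; apply/idP/idP; apply: fconnect_perm_sub => i.
  by rewrite cycle_revE; case: ifP; [right|left].
case in_i: (fconnect s x i); last by left; rewrite cycle_revE in_i.
right; apply: (@perm_inj _ (cycle_rev s x)).
by rewrite permKV cycle_revE fconnect_permr in_i permK.
Qed.

Lemma order_cycle_rev s x : fingraph.order (cycle_rev s x) =1 fingraph.order s.
Proof. by move=> y; apply: eq_card => z; rewrite !inE /= fconnect_cycle_rev. Qed.

Lemma cycle_revK s x : cycle_rev (cycle_rev s x) x = s.
Proof.
apply/permP => i; rewrite cycle_revE fconnect_cycle_rev.
case: ifP => in_i; last by rewrite cycle_revE in_i.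
by apply: (@perm_inj _ (cycle_rev s x)); rewrite permKV cycle_revE fconnect_permr in_i permK.
Qed.

Definition odd_cycles s := [set i | odd (fingraph.order s i)].

Definition flip_odd_cycle s :=
  if [pick x in odd_cycles s] is Some x then cycle_rev s x else s.

Lemma odd_cycles_flip s : odd_cycles (flip_odd_cycle s) = odd_cycles s.
Proof.
rewrite /flip_odd_cycle; case: pickP => // x _.
by apply/setP => i; rewrite !inE order_cycle_rev.
Qed.

Lemma flip_odd_cycleK : involutive flip_odd_cycle.
Proof.
move=> s; rewrite {1}/flip_odd_cycle odd_cycles_flip /flip_odd_cycle.
by case: [pick x in odd_cycles s] => [x|] //; rewrite cycle_revK.
Qed.

Lemma even_cycles_pairing s : odd_cycles s = set0 ->
  exists mu : T -> T, involutive mu /\ forall i, mu i = s i \/ s (mu i) = i.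
Proof.
move=> no_odd.
have sym_s : connect_sym (frel s) by move=> a b; rewrite fconnect_sym //; apply: perm_inj.
have rootS i : froot s (s i) = froot s i.
  by symmetry; apply/(fingraph.rootP sym_s); apply: fconnect1.
have rootSV i : froot s ((s^-1)%g i) = froot s i by rewrite -{2}(permKV s i) rootS.
have root_con i : fconnect s (froot s i) i by rewrite sym_s; apply: fingraph.connect_root.
(* pair each point with its neighbour along the (even) cycle, alternating from the root *)
pose mu i := if odd (findex s (froot s i) i) then (s^-1)%g i else s i.
exists mu; split => i; last by rewrite /mu; case: ifP; [rewrite permKV; right|left].
set b := froot s i; set k := findex s b i.
have iter_k : iter k s b = i by apply: iter_findex; apply: root_con.
have k_lt : k < fingraph.order s b by apply: findex_max; apply: root_con.
have even_b : ~~ odd (fingraph.order s b).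
  by apply/negP => odd_b; have := in_set0 b; rewrite -no_odd inE odd_b.
rewrite {2}/mu -/b -/k; case: ifP => odd_k.
- have k_gt0 : 0 < k by case: (k) odd_k.
  have iter_pred : (s^-1)%g i = iter k.-1 s b.
    by rewrite -iter_k -(prednK k_gt0) iterS permK.
  rewrite /mu rootSV -/b {1}iter_pred findex_iter; last first.
    by rewrite (leq_ltn_trans (leq_pred _)).
  by rewrite -(prednK k_gt0) /= in odd_k; rewrite (negbTE odd_k) permKV.
- have iter_succ : s i = iter k.+1 s b by rewrite -iter_k.
  rewrite /mu rootS -/b iter_succ findex_iter; last first.
    by rewrite ltn_neqAle k_lt andbT; apply: contraNneq even_b => <-; rewrite /= odd_k.
  by rewrite /= odd_k /= permK.
Qed.

End CycleReversal.

Lemma iter_cycle (T : finType) (f : T -> T) x : exists a d,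
  let y := iter a f x in
  [/\ 0 < d, iter d f y = y & forall k, 0 < k < d -> iter k f y != y].
Proof.
have /trajectP [a a_lt loop_a] := looping_order f x.
have period : exists d, (0 < d) && (iter d f (iter a f x) == iter a f x).
  exists (fingraph.order f x - a); rewrite subn_gt0 a_lt -iterD subnK ?loop_a ?eqxx //.
  exact: ltnW.
case: (ex_minnP period) => d /andP [d_gt0 /eqP cycle_d] d_min.
exists a, d; split => // k /andP [k_gt0 k_lt]; apply/negP => /eqP cycle_k.
by have := d_min k; rewrite k_gt0 cycle_k eqxx leqNgt k_lt => /(_ isT).
Qed.

Section TargetedForest.
Variables (nv ne : nat) (ends : 'I_ne -> 'I_nv * 'I_nv) (rho : 'I_nv) (C : {set 'I_ne}).

Definition joins c (u v : 'I_nv) := (ends c == (u, v)) || (ends c == (v, u)).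

Definition opposite c (v : 'I_nv) := if (ends c).1 == v then (ends c).2 else (ends c).1.

Lemma adjEP (D : {set 'I_ne}) u v : reflect (exists2 c, c \in D & joins c u v) (adjE ends D u v).
Proof. exact: (iffP exists_inP). Qed.

Lemma adjE_sym (D : {set 'I_ne}) : symmetric (adjE ends D).
Proof. by move=> u v; apply/adjEP/adjEP => -[c cD]; exists c; rewrite // /joins orbC. Qed.

Lemma adjE_connect_sym (D : {set 'I_ne}) : connect_sym (adjE ends D).
Proof. exact/sym_connect_sym/adjE_sym. Qed.

Lemma joins_opposite c v :
  (v == (ends c).1) || (v == (ends c).2) -> joins c v (opposite c v).
Proof.
rewrite /joins /opposite; case: (ends c) => a b /=.
by case/orP => /eqP ->; rewrite ?eqxx //=; case: (eqVneq a b) => [->|_]; rewrite eqxx ?orbT.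
Qed.

Lemma joins_inj : simple_graph ends -> forall c d u v, joins c u v -> joins d u v -> c = d.
Proof.
case=> lt_ends inj_ends c d u v c_uv d_uv; apply: inj_ends.
move: c_uv d_uv (lt_ends c) (lt_ends d); rewrite /joins.
case: (ends c) => a b; case: (ends d) => a' b' /=.
by case/orP => /eqP [-> ->] /orP [] /eqP [-> ->] // lt1 lt2;
  have := ltn_trans lt1 lt2; rewrite ltnn.
Qed.

Variable target : 'I_ne -> 'I_nv.
Hypothesis target_end : forall c, c \in C -> (target c == (ends c).1) || (target c == (ends c).2).
Hypothesis target_neq_root : forall c, c \in C -> target c != rho.
Hypothesis target_inj : {in C &, injective target}.

Definition source v := (v == rho) || [forall c in C, target c != v].
Definition dimer_site v := (v != rho) && [forall c in C, target c != v].

Lemma dimer_site_source v : dimer_site v -> source v.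
Proof. by case/andP => _ untargeted; rewrite /source untargeted orbT. Qed.

Lemma joins_target c u v : c \in C -> joins c u v -> (target c == u) || (target c == v).
Proof.
move=> cC; case/orP: (target_end cC) => /eqP ->.
  by case/orP => /eqP ->; rewrite eqxx ?orbT.
by case/orP => /eqP ->; rewrite eqxx ?orbT.
Qed.

(* along a simple path leaving an untargeted vertex, each edge targets its far end *)
Lemma path_last_targeted p x : path (adjE ends C) x p -> uniq (x :: p) -> p != [::] ->
  (forall c, c \in C -> joins c x (head x p) -> target c != x) -> ~~ source (last x p).
Proof.
elim: p x => [//|y p IHp] x /= /andP [/adjEP [c cC c_xy] path_p] uniq_p _ x_untargeted.
have target_c : target c = y.
  by case/orP: (joins_target cC c_xy) => /eqP //; move/eqP: (x_untargeted c cC c_xy).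
case: p IHp path_p uniq_p => [|z p] IHp path_p uniq_p /=.
  rewrite /source negb_or -target_c target_neq_root //=.
  by apply/forallPn; exists c; rewrite cC eqxx.
apply: (IHp y) => //; first by case/andP: uniq_p.
move=> c' c'C c'_yz; apply/eqP => target_c'.
have c'c : c' = c by apply: target_inj; rewrite // target_c'.
have zx : z = x.
  by move: c_xy c'_yz; rewrite c'c /joins; case/orP => /eqP -> /orP [] /eqP [] //= -> ->.
by move: uniq_p; rewrite zx !inE eqxx orbT.
Qed.

Lemma sources_disconnected u w :
  source u -> source w -> u != w -> ~~ connect (adjE ends C) u w.
Proof.
move=> src_u src_w neq_uw; apply/negP => /connectP [p path_p w_last].
case: (shortenP path_p) w_last => p' path_p' uniq_p' _ w_last.
move: src_w; apply/negP; rewrite w_last; apply: path_last_targeted => //.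
  by case: p' {path_p' uniq_p'} w_last => //= w_u; rewrite w_u eqxx in neq_uw.
move=> c cC _; case/orP: src_u => [/eqP -> | /forall_inP untargeted].
  exact: target_neq_root.
exact: untargeted.
Qed.

Definition in_edge v := [pick c in C | target c == v].

Definition tail v := if in_edge v is Some c then opposite c v else v.

Lemma in_edgeP v c : in_edge v = Some c -> c \in C /\ target c = v.
Proof. by rewrite /in_edge; case: pickP => // c' /andP [c'C /eqP <-] [<-]. Qed.

Lemma joins_tail v c : in_edge v = Some c -> joins c v (tail v).
Proof.
move=> in_c; have [cC target_c] := in_edgeP in_c.
by rewrite /tail in_c -target_c; apply/joins_opposite/target_end.
Qed.

(* otherwise following in-edges backwards from u would close a cycle of C *)
Lemma connect_dimer_site : acyclic ends C -> forall u,
  ~~ connect (adjE ends C) rho u -> exists2 v, connect (adjE ends C) u v & dimer_site v.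
Proof.
move=> acyclicC u rho_u; apply/exists_inP; apply: contraT; rewrite negb_exists => /forallP none.
have sym := adjE_connect_sym.
have targeted v : connect (adjE ends C) u v -> exists c, in_edge v = Some c.
  move=> u_v; rewrite /in_edge; case: pickP => [c _|no_in]; first by exists c.
  case/negP: (none v); rewrite u_v /=; apply/andP; split.
    by apply: contraNneq rho_u => <-; rewrite sym.
  by apply/forall_inP => c cC; move: (no_in c); rewrite cC /= => /negbT.
have u_tail k : connect (adjE ends C) u (iter k tail u).
  elim: k => //= k IHk; have [c in_c] := targeted _ IHk.
  apply: connect_trans IHk (connect1 _); apply/adjEP; exists c; last exact: joins_tail.
  by case: (in_edgeP in_c).
have [a [d [d_gt0 cycle_d d_min]]] := iter_cycle tail u.
set x := iter a tail u in cycle_d d_min.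
have [c in_c] := targeted _ (u_tail a); have [cC target_c] := in_edgeP in_c.
have tail_iter k : 0 < k <= d -> connect (adjE ends (C :\ c)) (tail x) (iter k tail x).
  elim: k => [//|[//|k] IHk] /andP [_ k_lt].
  have x_k : iter k.+1 tail x != x by apply: d_min.
  have [c' in_c'] : exists c', in_edge (iter k.+1 tail x) = Some c'.
    by apply: targeted; rewrite -iterD u_tail.
  have [c'C target_c'] := in_edgeP in_c'.
  apply: connect_trans (IHk (ltnW k_lt)) (connect1 _); apply/adjEP; exists c'.
    rewrite !inE c'C andbT; apply: contraNneq x_k => c'c.
    by rewrite -target_c' c'c target_c.
  exact: joins_tail.
have := acyclicC c cC; have := tail_iter d; rewrite d_gt0 leqnn cycle_d => /(_ isT) con.
by case/orP: (joins_tail in_c) => /eqP -> /=; rewrite ?con // sym con.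
Qed.

Variable partner : 'I_nv -> 'I_nv.
Hypothesis partner_site : forall v, dimer_site v -> dimer_site (partner v).
Hypothesis partnerK : forall v, dimer_site v -> partner (partner v) = v.
Hypothesis partner_adj : forall v, dimer_site v -> adj ends v (partner v).

Definition dimers := [set e | dimer_site (ends e).1 & partner (ends e).1 == (ends e).2].

Lemma dimers_joins d v : d \in dimers -> (v == (ends d).1) || (v == (ends d).2) ->
  joins d v (partner v) /\ dimer_site v.
Proof.
rewrite inE => /andP [site1 /eqP partner1]; rewrite /joins.
have partner2 : partner (ends d).2 = (ends d).1 by rewrite -partner1 partnerK.
case/orP => /eqP ->; first by rewrite partner1 -surjective_pairing eqxx.
by rewrite partner2 -surjective_pairing eqxx orbT -partner1 partner_site.
Qed.

Lemma covered_dimers v : covered ends dimers v = dimer_site v.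
Proof.
apply/exists_inP/idP => [[d d_in v_end] | site_v]; first by case: (dimers_joins d_in v_end).
have /adjEP [e _] := partner_adj site_v; rewrite /joins.
by case/orP => /eqP ends_e; exists e;
  rewrite ?inE ends_e /= ?site_v ?partner_site ?partnerK ?eqxx ?orbT.
Qed.

Lemma dimer_rooted_forest_of_targets : simple_graph ends -> acyclic ends C ->
  odd #|C| = odd (nv - 1) -> dimer_rooted_forest ends rho C.
Proof.
move=> sg acyclicC parity; do 2 split => //.
have sym := adjE_connect_sym C.
have rho_source : source rho by rewrite /source eqxx.
exists dimers; split; [|split; [|split]].
- apply/pred0P => e /=; apply/negP => /andP [eC]; rewrite inE => /andP [site1 /eqP partner1].
  have site2 : dimer_site (ends e).2 by rewrite -partner1 partner_site.
  have neq_ends : (ends e).1 != (ends e).2 by rewrite neq_ltn (proj1 sg e).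
  case/negP: (sources_disconnected (dimer_site_source site1) (dimer_site_source site2) neq_ends).
  by apply/connect1/adjEP; exists e; rewrite // /joins -surjective_pairing eqxx.
- move=> d1 d2 d1_in d2_in; apply: contraNT => /pred0Pn [v /andP [v1 v2]].
  rewrite !inE in v1 v2; have [j1 _] := dimers_joins d1_in v1.
  by have [j2 _] := dimers_joins d2_in v2; rewrite (joins_inj sg j1 j2).
- move=> v rho_v; rewrite covered_dimers; apply: contraTN rho_v => site_v.
  apply: sources_disconnected (dimer_site_source site_v) _ => //.
  by rewrite eq_sym; case/andP: site_v.
- move=> u rho_u; have [v0 u_v0 site_v0] := connect_dimer_site acyclicC rho_u.
  rewrite -(cards1 v0); apply: eq_card => v; rewrite !inE covered_dimers.
  apply/andP/eqP => [[u_v site_v] | ->]; last by rewrite u_v0 site_v0.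
  apply/eqP; apply: contraT => neq_v.
  case/negP: (sources_disconnected (dimer_site_source site_v) (dimer_site_source site_v0) neq_v).
  by rewrite (connect_trans _ u_v0) // sym.
Qed.

End TargetedForest.
Local Open Scope ring_scope.

Section SkewDeterminant.
Variables (R : numDomainType) (N : nat) (A : 'M[R]_N).
Hypothesis skewA : A^T = - A.

Lemma skew_entry i j : A j i = - A i j.
Proof. by have /matrixP/(_ i j) := skewA; rewrite !mxE. Qed.

Lemma det_skew_odd : odd N -> \det A = 0.
Proof.
move=> oddN; have : \det A = (-1) ^+ N * \det A.
  by rewrite -detZ scaleN1r -skewA det_tr.
by rewrite -signr_odd oddN expr1 mulN1r => /eqP; rewrite eq_sym eqNr => /eqP.
Qed.

Definition det_term (s : 'S_N) := (-1) ^+ s * \prod_i A i (s i).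

(* reversing an odd cycle of s flips the sign of an odd number of factors *)
Lemma det_term_flip s : odd_cycles s != set0 ->
  det_term (flip_odd_cycle s) = - det_term s.
Proof.
rewrite /flip_odd_cycle; case: pickP => [x | none]; last first.
  by case/set0Pn => i; rewrite none.
rewrite inE => odd_x _; rewrite /det_term odd_cycle_rev.
rewrite (bigID (fconnect s x)) [in RHS](bigID (fconnect s x)) /=.
have -> : \prod_(i | ~~ fconnect s x i) A i (cycle_rev s x i) =
          \prod_(i | ~~ fconnect s x i) A i (s i).
  by apply: eq_bigr => i /negbTE out_i; rewrite cycle_revE out_i.
have -> : \prod_(i | fconnect s x i) A i (cycle_rev s x i) =
          \prod_(i | fconnect s x i) - A i (s i).
  rewrite (reindex_inj (@perm_inj _ s)) /=.
  under eq_bigl do rewrite fconnect_permr.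
  by apply: eq_bigr => i in_i; rewrite cycle_revE fconnect_permr in_i permK skew_entry.
rewrite prodrN -[(-1) ^+ #|_|]signr_odd [odd _]odd_x.
by rewrite expr1 mulN1r mulNr mulrN.
Qed.

Lemma det_skew_even_term : \det A != 0 ->
  exists2 s : 'S_N, odd_cycles s = set0 & det_term s != 0.
Proof.
have odd_terms0 : \sum_(s : 'S_N | odd_cycles s != set0) det_term s = 0.
  apply/eqP; rewrite -eqNr -sumrN [X in _ == X](reindex_inj (can_inj (@flip_odd_cycleK _))) /=.
  apply/eqP/eq_big => [s | s odd_s]; first by rewrite odd_cycles_flip.
  by rewrite det_term_flip.
rewrite /determinant (bigID (fun s : 'S_N => odd_cycles s == set0)) /= odd_terms0 addr0.
case: (pickP (fun s : 'S_N => (odd_cycles s == set0) && (det_term s != 0))).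
  by move=> s /andP [/eqP even_s nz_s]; exists s.
move=> none; rewrite big1 ?eqxx // => s even_s.
by apply/eqP; have := none s; rewrite even_s /= => /negbFE.
Qed.

Lemma skew_det_pairing : \det A != 0 ->
  exists mu : 'I_N -> 'I_N, involutive mu /\ forall i, A i (mu i) != 0.
Proof.
move=> /det_skew_even_term [s even_s nz_s].
have nz_entry i : A i (s i) != 0.
  apply: contraNneq nz_s => A0; apply/eqP.
  by rewrite /det_term (bigD1 i) //= A0 mul0r mulr0.
have [mu [mu_inv mu_s]] := even_cycles_pairing even_s.
exists mu; split => // i; have [->|s_mu] := mu_s i; first exact: nz_entry.
by rewrite -{1}s_mu skew_entry oppr_eq0.
Qed.

End SkewDeterminant.

Lemma skew_partT (R : pzRingType) m (A : 'M[R]_m) : (skew_part A)^T = - skew_part A.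
Proof. by rewrite /skew_part raddfB /= trmxK opprB. Qed.

Lemma skew_part_neq0 (R : pzRingType) m (A : 'M[R]_m) i j :
  skew_part A i j != 0 -> i != j /\ (A i j != 0) || (A j i != 0).
Proof.
rewrite !mxE; have [->|neq_ij] := eqVneq i j; first by rewrite subrr eqxx.
move=> nz; split=> //; apply: contraNT nz; rewrite negb_or !negbK => /andP [/eqP Aij /eqP Aji].
by rewrite Aij Aji !if_same subrr.
Qed.

Lemma block0_skew (R : pzRingType) m n (B : 'M[R]_(m, n)) (S : 'M_n) :
  S^T = - S -> (block_mx 0 B (- B^T) S)^T = - block_mx 0 B (- B^T) S.
Proof. by move=> skewS; rewrite tr_block_mx opp_block_mx skewS !raddfN /= trmxK trmx0 oppr0 opprK. Qed.

Lemma unit_block0_surj (R : comUnitRingType) m n (B : 'M[R]_(m, n)) X (S : 'M_n) :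
  block_mx 0 B X S \in unitmx -> forall f : 'cV_m, exists z : 'cV_n, B *m z = f.
Proof.
move=> unitM f; set z := invmx (block_mx 0 B X S) *m col_mx f 0.
exists (dsubmx z); have : block_mx 0 B X S *m z = col_mx f 0.
  by rewrite mulmxA mulmxV // mul1mx.
by rewrite -[z in _ *m z]vsubmxK mul_block_col mul0mx add0r => /eq_col_mx [].
Qed.

Section Incidence.
Variables (R : nzRingType) (nv ne : nat) (ends : 'I_ne -> 'I_nv * 'I_nv).

Lemma incidenceE e v : incidence ends R e v =
  if v == (ends e).1 then 1 else if v == (ends e).2 then -1 else 0.
Proof. by rewrite mxE. Qed.

Lemma incidence_neq0 e v :
  incidence ends R e v != 0 -> (v == (ends e).1) || (v == (ends e).2).
Proof. by rewrite incidenceE; case: (v == _); case: (v == _); rewrite ?eqxx. Qed.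

Lemma incidence_sum e (p : 'I_nv -> R) : (ends e).1 != (ends e).2 ->
  \sum_v incidence ends R e v * p v = p (ends e).1 - p (ends e).2.
Proof.
move=> neq_ends; rewrite (bigD1 (ends e).1) //= (bigD1 (ends e).2) 1?eq_sym //=.
rewrite big1 ?addr0 => [|v /andP [v1 v2]]; last by rewrite incidenceE (negbTE v1) (negbTE v2) mul0r.
by rewrite !incidenceE eqxx eq_sym (negbTE neq_ends) eqxx mul1r mulN1r.
Qed.

Lemma laplacian_adj u w : ((incidence ends R)^T *m incidence ends R) u w != 0 ->
  u != w -> adj ends u w.
Proof.
rewrite mxE => nz_uw neq_uw; apply: contraNT nz_uw => not_adj.
apply/eqP/big1 => e _; rewrite mxE.
have [/incidence_neq0 u_end | /negPn/eqP ->] := boolP (incidence ends R e u != 0); last first.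
  by rewrite mul0r.
have [/incidence_neq0 w_end | /negPn/eqP ->] := boolP (incidence ends R e w != 0); last first.
  by rewrite mulr0.
case/negP: not_adj; apply/adjEP; exists e; rewrite ?inE // /joins.
move: u_end w_end neq_uw; case: (ends e) => a b /=.
by case/orP => /eqP -> /orP [] /eqP ->; rewrite ?eqxx ?orbT.
Qed.

Lemma acyclic_of_potentials (C : {set 'I_ne}) :
  (forall e, e \in C -> exists p : 'I_nv -> R,
     forall c, c \in C -> p (ends c).1 - p (ends c).2 = (c == e)%:R) ->
  acyclic ends C.
Proof.
move=> potential e eC; have [p p_diff] := potential e eC.
have const_p : closed (adjE ends (C :\ e)) [pred v | p v == p (ends e).1].
  move=> u v /adjEP [c]; rewrite !inE => /andP [neq_ce cC].
  have := p_diff c cC; rewrite (negbTE neq_ce) => /eqP; rewrite subr_eq0 => /eqP p_c.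
  by rewrite /joins; case/orP => /eqP ends_c; rewrite ends_c /= in p_c; rewrite p_c.
apply/negP => /(closed_connect const_p); rewrite !inE eqxx => /esym/eqP p_e.
by have := p_diff e eC; rewrite eqxx p_e subrr => /esym/eqP; rewrite oner_eq0.
Qed.

End Incidence.

Lemma B_C_hat_surj_acyclic (R : nzRingType) n ne (ends : 'I_ne -> 'I_n.+1 * 'I_n.+1)
    (rho : 'I_n.+1) (C : {set 'I_ne}) :
  simple_graph ends -> (forall f : 'cV[R]_#|C|, exists z, B_C_hat R ends C rho *m z = f) ->
  acyclic ends C.
Proof.
move=> sg surjB; apply: (@acyclic_of_potentials R) => e eC.
have [z Bz] := surjB (\col_a (enum_val a == e)%:R).
pose p v := if unlift rho v is Some j then z j 0 else 0.
exists p => c cC.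
have /matrixP/(_ (enum_rank_in eC c) 0) := Bz; rewrite !mxE enum_rankK_in // => <-.
rewrite -incidence_sum ?neq_ltn ?(proj1 sg c) // (bigD1_ord rho) //= {1}/p unlift_none mulr0 add0r.
by apply: eq_bigr => j _; rewrite /p liftK [in RHS]mxE enum_rankK_in.
Qed.

Section DimerMatrix.
Variables (R : numFieldType) (n ne : nat) (ends : 'I_ne -> 'I_n.+1 * 'I_n.+1).
Variables (rho : 'I_n.+1) (C : {set 'I_ne}).
Hypothesis sg : simple_graph ends.

Definition dimer_matrix : 'M[R]_(#|C| + n) :=
  block_mx 0 (B_C_hat R ends C rho) (- (B_C_hat R ends C rho)^T) (skew_part (L_hat R ends rho)).

Lemma dimer_matrix_skew : dimer_matrix^T = - dimer_matrix.
Proof. exact/block0_skew/skew_partT. Qed.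

Lemma dimer_matrixEul a b : dimer_matrix (lshift n a) (lshift n b) = 0.
Proof. by rewrite block_mxEul mxE. Qed.

Lemma dimer_matrixEur a j :
  dimer_matrix (lshift n a) (rshift #|C| j) = incidence ends R (enum_val a) (lift rho j).
Proof. by rewrite block_mxEur mxE. Qed.

Lemma dimer_matrixEdr j k :
  dimer_matrix (rshift #|C| j) (rshift #|C| k) = skew_part (L_hat R ends rho) j k.
Proof. by rewrite block_mxEdr. Qed.

Lemma dimer_matrix_parity : \det dimer_matrix != 0 -> odd #|C| = odd n.
Proof.
move=> det_nz; have : ~~ odd (#|C| + n).
  by apply: contra det_nz => odd_size; rewrite det_skew_odd ?dimer_matrix_skew.
by rewrite oddD; case: (odd #|C|); case: (odd n).
Qed.

Lemma dimer_matrix_acyclic : \det dimer_matrix != 0 -> acyclic ends C.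
Proof.
move=> det_nz; apply: (@B_C_hat_surj_acyclic R) => //; apply: unit_block0_surj.
by rewrite unitmxE unitfE; apply: det_nz.
Qed.

Section Pairing.
Variable mu : 'I_(#|C| + n) -> 'I_(#|C| + n).
Hypothesis muK : involutive mu.
Hypothesis mu_supp : forall i, dimer_matrix i (mu i) != 0.

(* the indices of [dimer_matrix] are the edges of C (enumerated) followed by the nodes other
   than rho (through [lift rho]) *)
Definition slot_node (x : 'I_(#|C| + n)) := if split x is inr j then lift rho j else rho.

Lemma slot_nodeR j : slot_node (rshift #|C| j) = lift rho j.
Proof. by rewrite /slot_node -[rshift _ j]/(unsplit (inr _ j)) unsplitK. Qed.

Definition target c :=
  if [pick a | enum_val a == c] is Some a then slot_node (mu (lshift n a)) else rho.

Lemma target_slot a :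
  exists j, target (enum_val a) = lift rho j /\ mu (lshift n a) = rshift #|C| j.
Proof.
have [j mu_a] : exists j, mu (lshift n a) = rshift #|C| j.
  case: (split_ordP (mu (lshift n a))) => [b mu_a | j mu_a]; last by exists j.
  by have := mu_supp (lshift n a); rewrite mu_a dimer_matrixEul eqxx.
exists j; split => //; rewrite /target; case: pickP => [a' /eqP /enum_val_inj -> | none].
  by rewrite mu_a slot_nodeR.
by have := none a; rewrite eqxx.
Qed.

Lemma mem_enum_val (c : 'I_ne) : c \in C -> exists a : 'I_#|C|, c = enum_val a.
Proof. by move=> cC; exists (enum_rank_in cC c); rewrite enum_rankK_in. Qed.

Lemma target_end c : c \in C -> (target c == (ends c).1) || (target c == (ends c).2).
Proof.
move=> /mem_enum_val [a ->]; have [j [-> mu_a]] := target_slot a.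
by apply: (@incidence_neq0 R); rewrite -dimer_matrixEur -mu_a mu_supp.
Qed.

Lemma target_neq_root c : c \in C -> target c != rho.
Proof. by move=> /mem_enum_val [a ->]; have [j [-> _]] := target_slot a; rewrite lift_eqF. Qed.

Lemma target_inj : {in C &, injective target}.
Proof.
move=> c c' /mem_enum_val [a ->] /mem_enum_val [a' ->].
have [j [-> mu_a]] := target_slot a; have [j' [-> mu_a']] := target_slot a'.
move/lift_inj => eq_j; have : mu (lshift n a) = mu (lshift n a') by rewrite mu_a mu_a' eq_j.
by move/(can_inj muK)/lshift_inj ->.
Qed.

Definition partner v := if unlift rho v is Some j then slot_node (mu (rshift #|C| j)) else v.

Let site := dimer_site rho C target.

Lemma dimer_site_slot v : site v -> exists j k,
  [/\ v = lift rho j, mu (rshift #|C| j) = rshift #|C| k & partner v = lift rho k].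
Proof.
case/andP; case: (unliftP rho v) => [j -> _ /forall_inP untargeted | ->]; last by rewrite eqxx.
case: (split_ordP (mu (rshift #|C| j))) => [a mu_j | k mu_j]; last first.
  by exists j, k; rewrite /partner liftK mu_j slot_nodeR.
have [j' [target_a mu_a]] := target_slot a.
move: mu_a; rewrite -mu_j muK => /rshift_inj eq_j.
by have := untargeted _ (enum_valP a); rewrite target_a eq_j eqxx.
Qed.

Lemma partner_site v : site v -> site (partner v).
Proof.
move=> /dimer_site_slot [j [k [_ mu_j ->]]]; rewrite /site /dimer_site lift_eqF /=.
apply/forall_inP => _ /mem_enum_val [a ->]; have [k' [-> mu_a]] := target_slot a.
apply: contraTneq isT => /lift_inj eq_k; rewrite eq_k -mu_j in mu_a.
by move/(can_inj muK)/eqP: mu_a; rewrite eq_lrshift.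
Qed.

Lemma partnerK v : site v -> partner (partner v) = v.
Proof.
move=> /dimer_site_slot [j [k [-> mu_j ->]]].
by rewrite /partner liftK -mu_j muK slot_nodeR.
Qed.

Lemma partner_adj v : site v -> adj ends v (partner v).
Proof.
move=> /dimer_site_slot [j [k [-> mu_j ->]]].
have := mu_supp (rshift #|C| j); rewrite mu_j dimer_matrixEdr => /skew_part_neq0 [neq_jk].
have neq_lift : lift rho j != lift rho k by rewrite (inj_eq (@lift_inj _ rho)).
case/orP; rewrite mxE /= => nz; first exact: (laplacian_adj nz).
by rewrite /adj adjE_sym; apply: (laplacian_adj nz); rewrite eq_sym.
Qed.

End Pairing.

Lemma dimer_rooted_forest_of_det : \det dimer_matrix != 0 -> dimer_rooted_forest ends rho C.
Proof.
move=> det_nz; have [mu [muK mu_supp]] := skew_det_pairing dimer_matrix_skew det_nz.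
apply: (dimer_rooted_forest_of_targets (target_end mu_supp) (target_neq_root mu_supp)
  (target_inj muK mu_supp) (partner_site muK mu_supp) (partnerK muK mu_supp)
  (partner_adj muK mu_supp) sg (dimer_matrix_acyclic det_nz)).
by rewrite subn1; apply: dimer_matrix_parity.
Qed.

End DimerMatrix.

Unset Implicit Arguments.
Theorem mainTheorem10 (R : realType) (n ne : nat)
  (ends : 'I_ne -> 'I_n.+1 * 'I_n.+1) (rho : 'I_n.+1) (C : {set 'I_ne}) :
  simple_graph ends -> connected_graph ends ->
  (\prod_(i < n.+1 | i != rho) ((deg ends i)%:R : R))^-1 *
    \det (block_mx (0 : 'M[R]_#|C|) (B_C_hat R ends C rho)
                   (- trmx (B_C_hat R ends C rho)) (skew_part (L_hat R ends rho))) != 0 ->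
  dimer_rooted_forest ends rho C.
Proof.
move=> sg _ nz; apply: (@dimer_rooted_forest_of_det R _ _ _ _ _ sg).
by apply: contraNneq nz => det0; rewrite [\det _]det0 mulr0.
Qed.
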